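(* Let $\Gamma\curvearrowright X, I$ be an almost simple dynamical ideal. Then in the associated permutation model $W[[X]]$, the union of any well-orderable set of well-orderable sets is well-orderable.
   Context: Work in ZFC. $V[[X]]$ is the well-founded model of ZFCA with set of atoms exactly $X$ in which every set of elements is represented by an element; a group action of $\Gamma$ on $X$ extends to $V[[X]]$ by $\gamma\cdot A=\{\gamma\cdot B:B\in A\}$. $\mathrm{stab}(A)=\{\gamma:\gamma\cdot A=A\}$, $\mathrm{pstab}(a)=\{\gamma:\gamma\cdot B=B\ \forall B\in a\}$. A dynamical ideal $\Gamma\curvearrowright X, I$: a group $\Gamma$ acting on $X$ and a $\Gamma$-invariant ideal $I$ on $X$ containing all singletons. Its permutation model $W[[X]]$ is the class of $A\in V[[X]]$ such that $A$ and every element of its transitive closure are symmetric, where $A$ is symmetric if $\mathrm{pstab}(b)\subseteq\mathrm{stab}(A)$ for some $b\in I$. The dynamical ideal is simple if for all $a\subseteq b$ in $I$, the only normal subgroup of $\mathrm{pstab}(a)$ containing $\mathrm{pstab}(b)$ is $\mathrm{pstab}(a)$ itself; it is almost simple if every set in $I$ has a superset $a\in I$ such that for every $b\in I$ with $a\subseteq b$, the only normal subgroup of $\mathrm{pstab}(a)$ containing $\mathrm{pstab}(b)$ is $\mathrm{pstab}(a)$. *)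

Set Implicit Arguments.

Definition is_group (G : Type) (mul : G -> G -> G) (inv : G -> G) (one : G) : Prop :=
  (forall a b c, mul a (mul b c) = mul (mul a b) c) /\
  (forall a, mul one a = a) /\
  (forall a, mul (inv a) a = one).

Definition is_action (G X : Type) (mul : G -> G -> G) (one : G) (act : G -> X -> X) : Prop :=
  (forall x, act one x = x) /\
  (forall g h x, act (mul g h) x = act g (act h x)).

Definition subsetX (X : Type) (a b : X -> Prop) : Prop := forall x, a x -> b x.

Definition dyn_ideal (G X : Type) (act : G -> X -> X) (I : (X -> Prop) -> Prop) : Prop :=
  I (fun _ => False) /\
  (forall a b, I b -> subsetX a b -> I a) /\
  (forall a b, I a -> I b -> I (fun x => a x \/ b x)) /\
  (forall y : X, I (fun x => x = y)) /\
  (forall g a, I a -> I (fun x => exists y, a y /\ x = act g y)).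

Definition pstab (G X : Type) (act : G -> X -> X) (a : X -> Prop) (g : G) : Prop :=
  forall x, a x -> act g x = x.

Definition normal_subgroup_of (G : Type) (mul : G -> G -> G) (inv : G -> G) (one : G)
  (H N : G -> Prop) : Prop :=
  N one /\
  (forall g h, N g -> N h -> N (mul g h)) /\
  (forall g, N g -> N (inv g)) /\
  (forall g, N g -> H g) /\
  (forall h n, H h -> N n -> N (mul (mul h n) (inv h))).

Definition almost_simple (G X : Type) (mul : G -> G -> G) (inv : G -> G) (one : G)
  (act : G -> X -> X) (I : (X -> Prop) -> Prop) : Prop :=
  forall a0, I a0 ->
    exists a, I a /\ subsetX a0 a /\
      forall b, I b -> subsetX a b ->
        forall N : G -> Prop,
          normal_subgroup_of mul inv one (pstab act a) N ->
          (forall g, pstab act b g -> N g) ->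
          forall g, pstab act a g -> N g.

(* ---------- V[[X]]: Aczel-style well-founded sets with atoms X ---------- *)

Inductive pset (X : Type) : Type :=
| Atom : X -> pset X
| Node : forall K : Type, (K -> pset X) -> pset X.

Arguments Atom {X} _.
Arguments Node {X} _ _.

Fixpoint eqs (X : Type) (a b : pset X) {struct a} : Prop :=
  match a with
  | Atom x => match b with Atom y => x = y | Node _ _ => False end
  | Node K f =>
      match b with
      | Atom _ => False
      | Node J g =>
          (forall i, exists j, eqs (f i) (g j)) /\
          (forall j, exists i, eqs (f i) (g j))
      end
  end.

Definition mem (X : Type) (z a : pset X) : Prop :=
  match a with
  | Atom _ => False
  | Node K f => exists i, eqs z (f i)
  end.

Definition is_set (X : Type) (a : pset X) : Prop :=
  match a with Atom _ => False | Node _ _ => True end.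

Definition idx (X : Type) (a : pset X) : Type :=
  match a with Atom _ => Empty_set | Node K _ => K end.

Definition elt (X : Type) (a : pset X) : idx a -> pset X :=
  match a as a0 return idx a0 -> pset X with
  | Atom _ => fun e => match e with end
  | Node K f => f
  end.

Definition union (X : Type) (A : pset X) : pset X :=
  Node {i : idx A & idx (elt A i)} (fun p => elt (elt A (projT1 p)) (projT2 p)).

Definition upair (X : Type) (a b : pset X) : pset X :=
  Node bool (fun t => if t then a else b).
Definition kpair (X : Type) (a b : pset X) : pset X :=
  upair (upair a a) (upair a b).

Fixpoint pact (G X : Type) (act : G -> X -> X) (g : G) (a : pset X) : pset X :=
  match a with
  | Atom x => Atom (act g x)
  | Node K f => Node K (fun i => pact act g (f i))
  end.

Definition symmetric (G X : Type) (act : G -> X -> X) (I : (X -> Prop) -> Prop)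
  (A : pset X) : Prop :=
  exists b, I b /\ forall g, pstab act b g -> eqs (pact act g A) A.

Fixpoint inW (G X : Type) (act : G -> X -> X) (I : (X -> Prop) -> Prop)
  (A : pset X) : Prop :=
  match A with
  | Atom x => symmetric act I (Atom x)
  | Node J f => symmetric act I (Node J f) /\ forall j, inW act I (f j)
  end.

Definition well_ordering (X : Type) (R A : pset X) : Prop :=
  let r := fun x y => mem (kpair x y) R in
  (forall p, mem p R -> exists x y, mem x A /\ mem y A /\ eqs p (kpair x y)) /\
  (forall x, mem x A -> ~ r x x) /\
  (forall x y z, mem x A -> mem y A -> mem z A -> r x y -> r y z -> r x z) /\
  (forall x y, mem x A -> mem y A -> r x y \/ eqs x y \/ r y x) /\
  (forall P : pset X -> Prop, (exists x, mem x A /\ P x) ->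
     exists m, mem m A /\ P m /\ forall y, mem y A -> P y -> ~ r y m).

Definition wellorderable_in_W (G X : Type) (act : G -> X -> X) (I : (X -> Prop) -> Prop)
  (A : pset X) : Prop :=
  exists R, inW act I R /\ is_set R /\ well_ordering R A.

(** A well-ordered set admits no non-trivial automorphism, so a well-orderable
    set of W[[X]] is fixed pointwise by the pointwise stabiliser of some support.
    For a well-ordered family A of well-orderable sets, almost simplicity gives a
    single support a, fixing A pointwise, such that for every y in A the
    elements of pstab(a) fixing y pointwise form a normal subgroup of pstab(a)
    containing a pointwise stabiliser; hence pstab(a) fixes every element of the
    union.  The lexicographic order obtained from the order of A and a choice of
    orders of its members is then fixed by pstab(a), so it lies in W[[X]]. *)

From Stdlib Require Import Classical ClassicalEpsilon FunctionalExtensionality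
  PropExtensionality Setoid Morphisms.
Set Implicit Arguments.
Unset Strict Implicit.

Section Sets.
Variable X : Type.

Lemma eqs_refl (a : pset X) : eqs a a.
Proof.
  induction a as [x|K f IH]; simpl; auto.
  split; intro i; exists i; apply IH.
Qed.

Lemma eqs_sym (a b : pset X) : eqs a b -> eqs b a.
Proof.
  revert b; induction a as [x|K f IH]; intros [y|J g]; simpl; auto.
  intros [H1 H2]; split.
  - intro j; destruct (H2 j) as [i Hi]; exists i; auto.
  - intro i; destruct (H1 i) as [j Hj]; exists j; auto.
Qed.

Lemma eqs_trans (a b c : pset X) : eqs a b -> eqs b c -> eqs a c.
Proof.
  revert b c; induction a as [x|K f IH]; intros [y|J g] [w|L h]; simpl;
    intros Hab Hbc; try contradiction; try congruence.
  destruct Hab as [H1 H2], Hbc as [H3 H4]; split.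
  - intro i; destruct (H1 i) as [j Hj], (H3 j) as [l Hl]; exists l; eauto.
  - intro l; destruct (H4 l) as [j Hj], (H2 j) as [i Hi]; exists i; eauto.
Qed.

#[global] Instance eqs_Equivalence : Equivalence (@eqs X).
Proof. split; [exact eqs_refl | exact eqs_sym | exact eqs_trans]. Qed.

Lemma mem_eqs_r (z a a' : pset X) : eqs a a' -> mem z a -> mem z a'.
Proof.
  destruct a as [x|K f], a' as [y|J g]; simpl; try tauto.
  intros [H1 _] [i Hi]; destruct (H1 i) as [j Hj]; exists j; now rewrite Hi.
Qed.

#[global] Instance mem_Proper : Proper (@eqs X ==> @eqs X ==> iff) (@mem X).
Proof.
  intros z z' Ez a a' Ea; split; intro H.
  - apply (mem_eqs_r Ea); destruct a as [|K f]; [exact H|].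
    destruct H as [i Hi]; exists i; now rewrite <- Ez.
  - apply (mem_eqs_r (eqs_sym Ea)); destruct a' as [|K f]; [exact H|].
    destruct H as [i Hi]; exists i; now rewrite Ez.
Qed.

Lemma mem_Node (K : Type) (f : K -> pset X) (i : K) : mem (f i) (Node K f).
Proof. exists i; reflexivity. Qed.

Lemma eqs_Node_pointwise (K : Type) (f g : K -> pset X) :
  (forall i, eqs (f i) (g i)) -> eqs (Node K f) (Node K g).
Proof. intro H; split; intro i; exists i; apply H. Qed.

Lemma mem_elt (a : pset X) (j : idx a) : mem (elt a j) a.
Proof. destruct a as [x|K f]; [destruct j | apply mem_Node]. Qed.

Lemma mem_elt_inv (z a : pset X) : mem z a -> exists j : idx a, eqs z (elt a j).
Proof. now destruct a. Qed.

Lemma mem_union (A z : pset X) :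
  mem z (union A) <-> exists y, mem y A /\ mem z y.
Proof.
  split.
  - intros [[i j] Hz]; exists (elt A i); split; [apply mem_elt|].
    rewrite Hz; apply mem_elt.
  - intros [y [Hy Hz]]; destruct A as [x|K f]; [destruct Hy|].
    destruct Hy as [i Hi]; rewrite Hi in Hz.
    destruct (mem_elt_inv Hz) as [j Hj]; exists (existT _ i j); exact Hj.
Qed.

#[global] Instance upair_Proper : Proper (@eqs X ==> @eqs X ==> @eqs X) (@upair X).
Proof. intros a a' Ea b b' Eb; apply eqs_Node_pointwise; now intros []. Qed.

#[global] Instance kpair_Proper : Proper (@eqs X ==> @eqs X ==> @eqs X) (@kpair X).
Proof. intros a a' Ea b b' Eb; unfold kpair; now rewrite Ea, Eb. Qed.

Lemma upair_inj (a b c d : pset X) : eqs (upair a b) (upair c d) ->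
  (eqs a c /\ eqs b d) \/ (eqs a d /\ eqs b c).
Proof.
  intros [H1 H2].
  destruct (H1 true) as [[] Ha], (H1 false) as [[] Hb],
    (H2 true) as [[] Hc], (H2 false) as [[] Hd]; simpl in *;
    first [ left; split; assumption | right; split; assumption
          | left; split; etransitivity; eauto; symmetry; eauto
          | right; split; etransitivity; eauto; symmetry; eauto ].
Qed.

Lemma kpair_inj (x y x' y' : pset X) :
  eqs (kpair x y) (kpair x' y') -> eqs x x' /\ eqs y y'.
Proof.
  intro H; apply upair_inj in H as [[Hs Hp] | [Hs Hp]];
    apply upair_inj in Hs; apply upair_inj in Hp.
  - split; [now destruct Hs as [[]|[]]|].
    destruct Hs as [[Ex _]|[Ex _]], Hp as [[_ E]|[Exy' Eyx']]; auto;
      now rewrite Eyx', <- Ex.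
  - destruct Hs as [[Ex Ey']|[Ey' Ex]], Hp as [[_ E]|[_ E]];
      split; auto; now rewrite E, <- Ex.
Qed.

Definition rel (R x y : pset X) : Prop := mem (kpair x y) R.

#[global] Instance rel_Proper (R : pset X) : Proper (@eqs X ==> @eqs X ==> iff) (rel R).
Proof. intros x x' Ex y y' Ey; unfold rel; now rewrite Ex, Ey. Qed.

Definition wellorders (r : pset X -> pset X -> Prop) (S : pset X) : Prop :=
  (forall x, mem x S -> ~ r x x) /\
  (forall x y z, mem x S -> mem y S -> mem z S -> r x y -> r y z -> r x z) /\
  (forall x y, mem x S -> mem y S -> r x y \/ eqs x y \/ r y x) /\
  (forall P : pset X -> Prop, (exists x, mem x S /\ P x) ->
     exists m, mem m S /\ P m /\ forall y, mem y S -> P y -> ~ r y m).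

Section WellordersProjections.
Variables (r : pset X -> pset X -> Prop) (S : pset X).
Hypothesis Hwo : wellorders r S.

Lemma wellorders_irrefl (x : pset X) : mem x S -> ~ r x x.
Proof. exact (proj1 Hwo x). Qed.

Lemma wellorders_trans (x y z : pset X) :
  mem x S -> mem y S -> mem z S -> r x y -> r y z -> r x z.
Proof. exact (proj1 (proj2 Hwo) x y z). Qed.

Lemma wellorders_total (x y : pset X) :
  mem x S -> mem y S -> r x y \/ eqs x y \/ r y x.
Proof. exact (proj1 (proj2 (proj2 Hwo)) x y). Qed.

Lemma wellorders_minimal (P : pset X -> Prop) : (exists x, mem x S /\ P x) ->
  exists m, mem m S /\ P m /\ forall y, mem y S -> P y -> ~ r y m.
Proof. exact (proj2 (proj2 (proj2 Hwo)) P). Qed.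

End WellordersProjections.

Lemma well_ordering_wellorders (R S : pset X) :
  well_ordering R S -> wellorders (rel R) S.
Proof. intros [_ H]; exact H. Qed.

Lemma well_ordering_eqs (R S S' : pset X) :
  eqs S S' -> well_ordering R S -> well_ordering R S'.
Proof.
  intros E [Hf [Hirr [Htr [Htri Hmin]]]].
  split; [|split; [|split; [|split]]]; setoid_rewrite <- E; auto.
Qed.

Definition graph_on (S : pset X) (r : pset X -> pset X -> Prop) : pset X :=
  Node {p : idx S * idx S & r (elt S (fst p)) (elt S (snd p))}
       (fun p => kpair (elt S (fst (projT1 p))) (elt S (snd (projT1 p)))).

Section GraphOn.
Variables (S : pset X) (r : pset X -> pset X -> Prop).
Context {r_Proper : Proper (@eqs X ==> @eqs X ==> iff) r}.

Lemma rel_graph_on (x y : pset X) :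
  rel (graph_on S r) x y <-> mem x S /\ mem y S /\ r x y.
Proof.
  split.
  - intros [[[i j] Hij] E]; apply kpair_inj in E as [Ex Ey]; simpl in *.
    rewrite Ex, Ey; repeat split; auto using mem_elt.
  - intros [Hx [Hy Hr]].
    destruct (mem_elt_inv Hx) as [i Ei], (mem_elt_inv Hy) as [j Ej].
    rewrite Ei, Ej in Hr; exists (existT _ (i, j) Hr).
    change (eqs (kpair x y) (kpair (elt S i) (elt S j))); now rewrite Ei, Ej.
Qed.

Lemma well_ordering_graph_on : wellorders r S -> well_ordering (graph_on S r) S.
Proof.
  intros [Hirr [Htr [Htri Hmin]]]; split.
  { intros p [[[i j] Hij] E]; exists (elt S i), (elt S j); auto using mem_elt. }
  change (wellorders (rel (graph_on S r)) S).
  split; [|split; [|split]].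
  - intros x Hx; rewrite rel_graph_on; intros (_ & _ & H); exact (Hirr x Hx H).
  - intros x y z Hx Hy Hz; rewrite !rel_graph_on; intros (_ & _ & H1) (_ & _ & H2).
    repeat split; eauto.
  - intros x y Hx Hy; rewrite !rel_graph_on.
    destruct (Htri x y Hx Hy) as [H|[H|H]]; intuition.
  - intros P HP; destruct (Hmin P HP) as [m [Hm [Pm Hmm]]].
    exists m; repeat split; auto; intros y Hy Py; rewrite rel_graph_on.
    intros (_ & _ & H); exact (Hmm y Hy Py H).
Qed.

End GraphOn.

Lemma eqs_invariant_choice (B : Type) (P : pset X -> B -> Prop) :
  inhabited B -> (forall y y' b, eqs y y' -> P y b -> P y' b) ->
  exists c : pset X -> B, (forall y y', eqs y y' -> c y = c y') /\
    (forall y, (exists b, P y b) -> P y (c y)).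
Proof.
  intros inhB HP.
  exists (fun y => epsilon inhB (fun b => exists y', eqs y y' /\ P y' b)); split.
  - intros y y' E; f_equal; apply functional_extensionality; intro b.
    apply propositional_extensionality.
    split; intros [w [Ew Hw]]; exists w; split; auto; [rewrite <- E | rewrite E]; auto.
  - intros y [b Hb].
    destruct (epsilon_spec inhB (fun b => exists y', eqs y y' /\ P y' b))
      as [w [Ew Hw]]; [exists b, y; split; [reflexivity | exact Hb]|].
    exact (HP w y _ (eqs_sym Ew) Hw).
Qed.

Section Lexicographic.
Variables (A : pset X) (rA : pset X -> pset X -> Prop)
  (rY : pset X -> pset X -> pset X -> Prop).
Context {rA_Proper : Proper (@eqs X ==> @eqs X ==> iff) rA}.
Context {rY_Proper : forall y, Proper (@eqs X ==> @eqs X ==> iff) (rY y)}.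
Hypothesis rA_wo : wellorders rA A.
Hypothesis rY_invariant : forall y y', eqs y y' -> rY y = rY y'.
Hypothesis rY_wo : forall y, mem y A -> wellorders (rY y) y.

Definition first_block (z y : pset X) : Prop :=
  mem y A /\ mem z y /\ forall y', mem y' A -> mem z y' -> ~ rA y' y.

Definition lex (z1 z2 : pset X) : Prop :=
  exists y1 y2, first_block z1 y1 /\ first_block z2 y2 /\
    (rA y1 y2 \/ (eqs y1 y2 /\ rY y1 z1 z2)).

#[local] Instance first_block_Proper : Proper (@eqs X ==> @eqs X ==> iff) first_block.
Proof.
  intros z z' Ez y y' Ey; unfold first_block.
  setoid_rewrite Ez; setoid_rewrite Ey; reflexivity.
Qed.

Lemma first_block_exists (z : pset X) : mem z (union A) -> exists y, first_block z y.
Proof.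
  intro Hz; apply mem_union in Hz.
  destruct (wellorders_minimal rA_wo Hz) as [m [Hm [Hzm Hmin]]].
  exists m; repeat split; auto.
Qed.

Lemma first_block_unique (z y1 y2 : pset X) :
  first_block z y1 -> first_block z y2 -> eqs y1 y2.
Proof.
  intros [H1 [H2 H3]] [H4 [H5 H6]].
  destruct (wellorders_total rA_wo H1 H4) as [Hr|[E|Hr]]; auto.
  - now destruct (H6 y1 H1 H2).
  - now destruct (H3 y2 H4 H5).
Qed.

Lemma first_block_union (z y : pset X) : first_block z y -> mem z (union A).
Proof. intros [H1 [H2 _]]; apply mem_union; eauto. Qed.

#[global] Instance lex_Proper : Proper (@eqs X ==> @eqs X ==> iff) lex.
Proof.
  intros z z' Ez w w' Ew; unfold lex.
  setoid_rewrite Ez; setoid_rewrite Ew; reflexivity.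
Qed.

Lemma lex_blocks (z1 z2 y1 y2 : pset X) :
  first_block z1 y1 -> first_block z2 y2 ->
  lex z1 z2 <-> rA y1 y2 \/ (eqs y1 y2 /\ rY y1 z1 z2).
Proof.
  intros B1 B2; split.
  - intros [y1' [y2' [B1' [B2' H]]]].
    pose proof (first_block_unique B1 B1') as E1.
    pose proof (first_block_unique B2 B2') as E2.
    now rewrite (rY_invariant E1), E1, E2.
  - intro H; exists y1, y2; auto.
Qed.

Lemma lex_irrefl (x : pset X) : mem x (union A) -> ~ lex x x.
Proof.
  intro Hx; destruct (first_block_exists Hx) as [y [Hy [Hxy Hfirst]]].
  rewrite (lex_blocks (conj Hy (conj Hxy Hfirst)) (conj Hy (conj Hxy Hfirst))).
  intros [Hr|[_ Hr]].
  - exact (wellorders_irrefl rA_wo Hy Hr).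
  - exact (wellorders_irrefl (rY_wo Hy) Hxy Hr).
Qed.

Lemma lex_trans (x y z : pset X) : mem x (union A) -> mem y (union A) ->
  mem z (union A) -> lex x y -> lex y z -> lex x z.
Proof.
  intros Hx Hy Hz.
  destruct (first_block_exists Hx) as [bx Bx], (first_block_exists Hy) as [b By],
    (first_block_exists Hz) as [bz Bz].
  rewrite (lex_blocks Bx By), (lex_blocks By Bz), (lex_blocks Bx Bz).
  destruct Bx as [Hbx [Hxb _]], By as [Hb [Hyb _]], Bz as [Hbz [Hzb _]].
  intros [Hxy|[Exy Hxy]] [Hyz|[Eyz Hyz]].
  - left; exact (wellorders_trans rA_wo Hbx Hb Hbz Hxy Hyz).
  - left; now rewrite <- Eyz.
  - left; now rewrite Exy.
  - right; split; [now rewrite Exy|].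
    rewrite <- (rY_invariant Exy) in Hyz.
    rewrite <- Exy in Hyb; rewrite <- Eyz, <- Exy in Hzb.
    exact (wellorders_trans (rY_wo Hbx) Hxb Hyb Hzb Hxy Hyz).
Qed.

Lemma lex_total (x y : pset X) : mem x (union A) -> mem y (union A) ->
  lex x y \/ eqs x y \/ lex y x.
Proof.
  intros Hx Hy.
  destruct (first_block_exists Hx) as [bx Bx], (first_block_exists Hy) as [b By].
  rewrite (lex_blocks Bx By), (lex_blocks By Bx).
  destruct Bx as [Hbx [Hxb _]], By as [Hb [Hyb _]].
  destruct (wellorders_total rA_wo Hbx Hb) as [Hr|[E|Hr]]; auto.
  rewrite <- E in Hyb; rewrite <- (rY_invariant E).
  destruct (wellorders_total (rY_wo Hbx) Hxb Hyb) as [H|[H|H]]; auto.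
  right; right; right; split; [now symmetry | exact H].
Qed.

(** The least element lies in the least block that meets [P]. *)
Lemma lex_minimal (P : pset X -> Prop) : (exists x, mem x (union A) /\ P x) ->
  exists m, mem m (union A) /\ P m /\ forall y, mem y (union A) -> P y -> ~ lex y m.
Proof.
  intros [x [Hx Px]].
  destruct (wellorders_minimal rA_wo (P := fun y => exists z, first_block z y /\ P z))
    as [y0 [Hy0 [[z0 [B0 Pz0]] Hy0min]]].
  { destruct (first_block_exists Hx) as [y B]; exists y; split; [exact (proj1 B)|eauto]. }
  destruct (wellorders_minimal (rY_wo Hy0) (P := fun z => first_block z y0 /\ P z))
    as [m [Hm [[Bm Pm] Hmmin]]]; [exists z0; split; [exact (proj1 (proj2 B0))|auto]|].
  exists m; repeat split; [exact (first_block_union Bm) | exact Pm |].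
  intros y Hy Py; destruct (first_block_exists Hy) as [b B].
  rewrite (lex_blocks B Bm); intros [Hr|[E Hr]].
  - exact (Hy0min b (proj1 B) (ex_intro _ y (conj B Py)) Hr).
  - rewrite (rY_invariant E) in Hr; rewrite E in B.
    exact (Hmmin y (proj1 (proj2 B)) (conj B Py) Hr).
Qed.

Lemma lex_wellorders : wellorders lex (union A).
Proof.
  split; [exact lex_irrefl | split; [exact lex_trans | split; [exact lex_total | exact lex_minimal]]].
Qed.

End Lexicographic.

Lemma union_wellorders (RA A : pset X) : well_ordering RA A ->
  (forall y, mem y A -> exists R, well_ordering R y) ->
  exists r, Proper (@eqs X ==> @eqs X ==> iff) r /\ wellorders r (union A).
Proof.
  intros HwoA Hwo.
  destruct (eqs_invariant_choice (P := fun y R => well_ordering R y)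
              (inhabits (Node Empty_set (Empty_set_rect _)))
              (fun _ _ _ => @well_ordering_eqs _ _ _)) as [choose_wo [Hinv Hspec]].
  exists (lex A (rel RA) (fun y => rel (choose_wo y))); split; [typeclasses eauto|].
  apply (lex_wellorders (well_ordering_wellorders HwoA)).
  - intros y y' E; now rewrite (Hinv y y' E).
  - intros y Hy; apply well_ordering_wellorders, Hspec, Hwo, Hy.
Qed.

End Sets.

Section Action.
Variables (X G : Type) (mul : G -> G -> G) (inv : G -> G) (one : G) (act : G -> X -> X).
Hypothesis HG : is_group mul inv one.
Hypothesis Hact : is_action mul one act.
Notation pa := (pact act).

Lemma mul_inv_r (g : G) : mul g (inv g) = one.
Proof.
  destruct HG as [Hassoc [Hone Hinv]].
  rewrite <- (Hone (mul g (inv g))), <- (Hinv (inv g)) at 1.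
  rewrite <- Hassoc, (Hassoc (inv g) g (inv g)), Hinv, Hone; apply Hinv.
Qed.

#[global] Instance pact_Proper (g : G) : Proper (@eqs X ==> @eqs X) (pa g).
Proof.
  intro a; induction a as [x|K f IH]; intros [y|J h]; simpl; try tauto.
  - now intros ->.
  - intros [H1 H2]; split.
    + intro i; destruct (H1 i) as [j Hj]; exists j; auto.
    + intro j; destruct (H2 j) as [i Hi]; exists i; auto.
Qed.

Lemma pact_one (a : pset X) : eqs (pa one a) a.
Proof.
  induction a as [x|K f IH]; simpl; [apply (proj1 Hact)|].
  split; intro i; exists i; auto.
Qed.

Lemma pact_mul (g h : G) (a : pset X) : eqs (pa (mul g h) a) (pa g (pa h a)).
Proof.
  induction a as [x|K f IH]; simpl; [apply (proj2 Hact)|].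
  split; intro i; exists i; auto.
Qed.

Lemma pact_inv_l (g : G) (a : pset X) : eqs (pa (inv g) (pa g a)) a.
Proof. now rewrite <- pact_mul, (proj2 (proj2 HG)), pact_one. Qed.

Lemma pact_inv_r (g : G) (a : pset X) : eqs (pa g (pa (inv g) a)) a.
Proof. now rewrite <- pact_mul, mul_inv_r, pact_one. Qed.

Lemma pact_eqs_inv (g : G) (a b : pset X) : eqs (pa g a) b -> eqs a (pa (inv g) b).
Proof. intro E; now rewrite <- E, pact_inv_l. Qed.

Lemma mem_pact (g : G) (z a : pset X) : mem z a -> mem (pa g z) (pa g a).
Proof.
  destruct a as [x|K f]; simpl; [tauto|].
  intros [i Hi]; exists i; now rewrite Hi.
Qed.

Lemma mem_stab (g : G) (z a : pset X) : eqs (pa g a) a -> mem z a -> mem (pa g z) a.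
Proof. intros E Hz; rewrite <- E; now apply mem_pact. Qed.

Lemma pact_kpair (g : G) (x y : pset X) :
  eqs (pa g (kpair x y)) (kpair (pa g x) (pa g y)).
Proof. apply eqs_Node_pointwise; intros []; apply eqs_Node_pointwise; now intros []. Qed.

Lemma rel_pact (R : pset X) (g : G) (x y : pset X) :
  eqs (pa g R) R -> rel R x y -> rel R (pa g x) (pa g y).
Proof. intros E H; unfold rel; rewrite <- pact_kpair; now apply mem_stab. Qed.

Lemma stab_inv (g : G) (a : pset X) : eqs (pa g a) a -> eqs (pa (inv g) a) a.
Proof. intro E; symmetry; now apply pact_eqs_inv. Qed.

Definition fixes_pointwise (g : G) (S : pset X) : Prop :=
  forall z, mem z S -> eqs (pa g z) z.

Lemma fixes_pointwise_stab (g : G) (S : pset X) :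
  is_set S -> fixes_pointwise g S -> eqs (pa g S) S.
Proof.
  destruct S as [x|K f]; [intros []|intros _ H].
  apply eqs_Node_pointwise; intro i; apply H, mem_Node.
Qed.

Lemma fixes_pointwise_one (S : pset X) : fixes_pointwise one S.
Proof. intros z _; apply pact_one. Qed.

Lemma fixes_pointwise_mul (g h : G) (S : pset X) :
  fixes_pointwise g S -> fixes_pointwise h S -> fixes_pointwise (mul g h) S.
Proof. intros Hg Hh z Hz; now rewrite pact_mul, Hh, Hg. Qed.

Lemma fixes_pointwise_inv (g : G) (S : pset X) :
  fixes_pointwise g S -> fixes_pointwise (inv g) S.
Proof. intros Hg z Hz; symmetry; apply pact_eqs_inv, Hg, Hz. Qed.

Lemma fixes_pointwise_conj (h n : G) (S : pset X) :
  eqs (pa h S) S -> fixes_pointwise n S -> fixes_pointwise (mul (mul h n) (inv h)) S.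
Proof.
  intros E Hn z Hz.
  rewrite !pact_mul, (Hn _ (mem_stab (stab_inv E) Hz)); apply pact_inv_r.
Qed.

(** An element moved by [g] and minimal as such is sent to a larger or to a
    smaller element, and either case produces a smaller moved element. *)
Lemma well_ordering_rigid (R S : pset X) (g : G) :
  well_ordering R S -> eqs (pa g S) S -> eqs (pa g R) R -> fixes_pointwise g S.
Proof.
  intros [_ [Hirr [_ [Htri Hmin]]]] HS HR x Hx; apply NNPP; intro Hmoved.
  destruct (Hmin (fun x => ~ eqs (pa g x) x)) as [m [Hm [Hmm Hmin_m]]]; [eauto|].
  fold (rel R) in *.
  assert (Hfixed : forall y, mem y S -> rel R y m -> eqs (pa g y) y).
  { intros y Hy Hr; apply NNPP; intro Hn; exact (Hmin_m y Hy Hn Hr). }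
  destruct (Htri m (pa g m) Hm (mem_stab HS Hm)) as [Hr|[E|Hr]].
  - apply (rel_pact (stab_inv HR)) in Hr; rewrite pact_inv_l in Hr.
    pose proof (Hfixed _ (mem_stab (stab_inv HS) Hm) Hr) as E.
    rewrite pact_inv_r in E; rewrite <- E in Hr; exact (Hirr m Hm Hr).
  - apply Hmm; now symmetry.
  - apply Hmm; apply (Hfixed _ (mem_stab HS Hm)), pact_eqs_inv in Hr.
    now rewrite pact_inv_l in Hr.
Qed.

End Action.

Section PermutationModel.
Variables (X G : Type) (mul : G -> G -> G) (inv : G -> G) (one : G)
  (act : G -> X -> X) (I : (X -> Prop) -> Prop).
Hypothesis HG : is_group mul inv one.
Hypothesis Hact : is_action mul one act.
Hypothesis HI : dyn_ideal act I.
Notation pa := (pact act).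

Lemma pstab_one (a : X -> Prop) : pstab act a one.
Proof. intros x _; apply (proj1 Hact). Qed.

Lemma pstab_mul (a : X -> Prop) (g h : G) :
  pstab act a g -> pstab act a h -> pstab act a (mul g h).
Proof. intros Hg Hh x Hx; now rewrite (proj2 Hact), Hh, Hg. Qed.

Lemma pstab_inv (a : X -> Prop) (g : G) : pstab act a g -> pstab act a (inv g).
Proof.
  intros Hg x Hx; rewrite <- (Hg x Hx) at 1.
  now rewrite <- (proj2 Hact), (proj2 (proj2 HG)), (proj1 Hact).
Qed.

Lemma pstab_antitone (a b : X -> Prop) (g : G) :
  subsetX a b -> pstab act b g -> pstab act a g.
Proof. intros Hab Hg x Hx; exact (Hg x (Hab x Hx)). Qed.

Lemma pstab_union_l (a b : X -> Prop) (g : G) :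
  pstab act (fun x => a x \/ b x) g -> pstab act a g.
Proof. apply pstab_antitone; intros x Hx; now left. Qed.

Lemma pstab_union_r (a b : X -> Prop) (g : G) :
  pstab act (fun x => a x \/ b x) g -> pstab act b g.
Proof. apply pstab_antitone; intros x Hx; now right. Qed.

Lemma ideal_union (a b : X -> Prop) : I a -> I b -> I (fun x => a x \/ b x).
Proof. apply (proj1 (proj2 (proj2 HI))). Qed.

Lemma symmetric_eqs (a a' : pset X) : eqs a a' -> symmetric act I a -> symmetric act I a'.
Proof.
  intros E [b [Hb H]]; exists b; split; auto.
  intros g Hg; rewrite <- E; exact (H g Hg).
Qed.

Lemma inW_symmetric (a : pset X) : inW act I a -> symmetric act I a.
Proof. destruct a; simpl; tauto. Qed.

Lemma inW_elt (a : pset X) (j : idx a) : inW act I a -> inW act I (elt a j).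
Proof. destruct a as [x|K f]; [destruct j | intros [_ H]; apply H]. Qed.

Lemma mem_symmetric (A y : pset X) : inW act I A -> mem y A -> symmetric act I y.
Proof.
  destruct A as [x|K f]; [intros _ []|].
  intros [_ H] [i Hi]; apply (symmetric_eqs (eqs_sym Hi)), inW_symmetric, H.
Qed.

Lemma symmetric_upair (x y : pset X) :
  symmetric act I x -> symmetric act I y -> symmetric act I (upair x y).
Proof.
  intros [bx [Hbx Hx]] [b [Hb Hy]]; exists (fun z => bx z \/ b z).
  split; [now apply ideal_union|]; intros g Hg; apply eqs_Node_pointwise; intros [].
  - exact (Hx g (pstab_union_l Hg)).
  - exact (Hy g (pstab_union_r Hg)).
Qed.

Lemma inW_upair (x y : pset X) : inW act I x -> inW act I y -> inW act I (upair x y).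
Proof.
  intros Hx Hy; split; [apply symmetric_upair; now apply inW_symmetric | now intros []].
Qed.

Lemma inW_kpair (x y : pset X) : inW act I x -> inW act I y -> inW act I (kpair x y).
Proof. intros; apply inW_upair; apply inW_upair; auto. Qed.

Lemma inW_union (A : pset X) :
  inW act I A -> symmetric act I (union A) -> inW act I (union A).
Proof. intros HA HU; split; [exact HU | intros [i j]; now apply inW_elt, inW_elt]. Qed.

Definition pointwise_symmetric (S : pset X) : Prop :=
  exists c, I c /\ forall g, pstab act c g -> fixes_pointwise act g S.

Lemma pointwise_symmetric_symmetric (S : pset X) :
  is_set S -> pointwise_symmetric S -> symmetric act I S.
Proof.
  intros HS [c [Hc Hfix]]; exists c; split; [exact Hc|].
  intros g Hg; exact (fixes_pointwise_stab HS (Hfix g Hg)).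
Qed.

Lemma wellorderable_pointwise_symmetric (R S : pset X) :
  symmetric act I S -> symmetric act I R -> well_ordering R S -> pointwise_symmetric S.
Proof.
  intros [bS [HbS HS]] [bR [HbR HR]] Hwo; exists (fun x => bS x \/ bR x).
  split; [now apply ideal_union|]; intros g Hg.
  exact (well_ordering_rigid HG Hact Hwo (HS g (pstab_union_l Hg)) (HR g (pstab_union_r Hg))).
Qed.

Lemma symmetric_graph_on (S : pset X) (r : pset X -> pset X -> Prop) (a : X -> Prop) :
  I a -> (forall g, pstab act a g -> fixes_pointwise act g S) ->
  symmetric act I (graph_on S r).
Proof.
  intros Ha Hfix; exists a; split; auto; intros g Hg.
  apply eqs_Node_pointwise; intro p; rewrite pact_kpair.
  now rewrite !(Hfix g Hg _ (mem_elt _)).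
Qed.

Lemma inW_graph_on (S : pset X) (r : pset X -> pset X -> Prop) (a : X -> Prop) :
  inW act I S -> I a -> (forall g, pstab act a g -> fixes_pointwise act g S) ->
  inW act I (graph_on S r).
Proof.
  intros HS Ha Hfix; split; [exact (symmetric_graph_on r Ha Hfix)|].
  intro p; apply inW_kpair; now apply inW_elt.
Qed.

(** The property that [almost_simple] provides for the enlarged support. *)
Definition simple_support (a : X -> Prop) : Prop :=
  forall b, I b -> subsetX a b ->
    forall N : G -> Prop, normal_subgroup_of mul inv one (pstab act a) N ->
      (forall g, pstab act b g -> N g) -> forall g, pstab act a g -> N g.

Lemma pointwise_fixer_normal (a : X -> Prop) (y : pset X) :
  (forall h, pstab act a h -> eqs (pa h y) y) ->
  normal_subgroup_of mul inv one (pstab act a)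
    (fun g => pstab act a g /\ fixes_pointwise act g y).
Proof.
  intro Hstab; split; [|split; [|split; [|split]]].
  - split; [apply pstab_one | exact (fixes_pointwise_one Hact (S := y))].
  - intros g h [Hg Fg] [Hh Fh]; split; [now apply pstab_mul|].
    now apply (fixes_pointwise_mul Hact).
  - intros g [Hg Fg]; split; [now apply pstab_inv|].
    now apply (fixes_pointwise_inv HG Hact).
  - now intros g [Hg _].
  - intros h n Hh [Hn Fn]; split.
    + apply pstab_mul; [apply pstab_mul | apply pstab_inv]; auto.
    + apply (fixes_pointwise_conj HG Hact); auto.
Qed.

(** The elements of pstab(a) fixing [y] pointwise form a normal subgroup of
    pstab(a) containing pstab(a ∪ c) for a pointwise support c of [y]. *)
Lemma simple_support_fixes (a : X -> Prop) (y : pset X) :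
  I a -> simple_support a -> (forall h, pstab act a h -> eqs (pa h y) y) ->
  pointwise_symmetric y -> forall g, pstab act a g -> fixes_pointwise act g y.
Proof.
  intros Ha Hsimple Hstab [c [Hc Hcfix]] g Hg.
  refine (proj2 (Hsimple (fun x => a x \/ c x) (ideal_union Ha Hc)
            (fun x Hx => or_introl Hx) _ (pointwise_fixer_normal Hstab) _ g Hg)).
  intros h Hh; exact (conj (pstab_union_l Hh) (Hcfix h (pstab_union_r Hh))).
Qed.

Lemma simple_support_fixes_union (a : X -> Prop) (A : pset X) :
  I a -> simple_support a -> inW act I A ->
  (forall g, pstab act a g -> fixes_pointwise act g A) ->
  (forall y, mem y A -> wellorderable_in_W act I y) ->
  forall g, pstab act a g -> fixes_pointwise act g (union A).
Proof.
  intros Ha Hsimple HA HaA Hwo g Hg z Hz; apply mem_union in Hz as [y [Hy Hz]].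
  destruct (Hwo y Hy) as [Ry [HRy [_ HwoRy]]].
  refine (simple_support_fixes Ha Hsimple _ _ Hg Hz).
  - intros h Hh; exact (HaA h Hh y Hy).
  - exact (wellorderable_pointwise_symmetric
             (mem_symmetric HA Hy) (inW_symmetric HRy) HwoRy).
Qed.

End PermutationModel.

Theorem mainTheorem13 (X G : Type) (mul : G -> G -> G) (inv : G -> G) (one : G)
  (act : G -> X -> X) (I : (X -> Prop) -> Prop)
  (HG : is_group mul inv one) (Hact : is_action mul one act)
  (HI : dyn_ideal act I) (Has : almost_simple mul inv one act I)
  (A : pset X) :
  inW act I A -> is_set A -> wellorderable_in_W act I A ->
  (forall y, mem y A -> is_set y /\ wellorderable_in_W act I y) ->
  inW act I (union A) /\ wellorderable_in_W act I (union A).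
Proof.
  intros HA _ [RA [HRA [_ HwoA]]] Hys.
  destruct (wellorderable_pointwise_symmetric HG Hact HI
              (inW_symmetric HA) (inW_symmetric HRA) HwoA) as [b [Hb HbA]].
  destruct (Has b Hb) as [a [Ha [Hba Hsimple]]].
  assert (HaU : forall g, pstab act a g -> fixes_pointwise act g (union A)).
  { apply (simple_support_fixes_union HG Hact HI Ha Hsimple HA).
    - intros g Hg; apply HbA; exact (pstab_antitone Hba Hg).
    - intros y Hy; exact (proj2 (Hys y Hy)). }
  assert (HUW : inW act I (union A)).
  { apply (inW_union HA), pointwise_symmetric_symmetric; [exact Logic.I|].
    exists a; split; [exact Ha | exact HaU]. }
  split; [exact HUW|].
  destruct (union_wellorders HwoA) as [r [Hr Hwo]].
  { intros y Hy; destruct (Hys y Hy) as [_ [R [_ [_ HR]]]]; eauto. }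
  exists (graph_on (union A) r); split; [exact (inW_graph_on HI r HUW Ha HaU)|].
  split; [exact Logic.I | exact (well_ordering_graph_on Hwo)].
Qed.
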